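(* Let $\lambda_1,\lambda_2$ be real numbers with $\lambda_1\neq\lambda_2$, and let $\mathfrak g$ be the real Lie algebra with basis $\{X_1,X_2,X_3,X_4\}$ whose only nonzero brackets (up to antisymmetry) are $\{X_1,X_2\}=\lambda_1X_2$, $\{X_1,X_3\}=\lambda_2X_3$, $\{X_1,X_4\}=-(\lambda_1+\lambda_2)X_4$. Write $\delta=\lambda_1-\lambda_2$, $a=2\lambda_1+\lambda_2$, $b=\lambda_1+2\lambda_2$. For $t>0$ let $K_t$ be the linear map whose matrix with respect to the ordered basis $(X_1,\dots,X_4)$ (with the $j$-th column giving the coordinates of $K_tX_j$) is \[ K_t=\begin{bmatrix} 1 & \frac1t & \frac{2b}{\delta t} & 0\\[3pt] -\frac{2at}{\delta} & -\frac{a}{\delta} & -\frac{2ab}{\delta^2} & \frac{b}{\delta t}\\[3pt] t & \frac12 & \frac{b}{\delta} & -\frac{1}{2t}\\[3pt] 0 & t & \frac{2at}{\delta} & 0 \end{bmatrix}. \] Then $K_t^2=-\mathrm{id}$ for every $t>0$, and the Nijenhuis tensor $N_t$ of $K_t$ is given by \begin{align*} N_t(X_1,X_2)&=\tfrac{b}{t}X_1,\qquad N_t(X_1,X_3)=\tfrac{2ab}{\delta t}X_1,\\ N_t(X_1,X_4)&=-\tfrac{b}{t^2}X_1+\tfrac{2ab}{\delta t}X_2-\tfrac{b}{t}X_3,\\ N_t(X_2,X_3)&=\tfrac{2b}{t^2}X_1-\tfrac{2ab}{\delta t}X_2+\tfrac{b}{t}X_3,\\ N_t(X_2,X_4)&=\tfrac{ab}{\delta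 t^2}X_2-\tfrac{b}{2t^2}X_3,\\ N_t(X_3,X_4)&=\tfrac{2ab^2}{\delta^2t^2}X_2-\tfrac{b^2}{\delta t^2}X_3. \end{align*} In particular $N_t\to0$ as $t\to\infty$. Consequently, if $A\in SL(3,\mathbb Z)$ has three distinct positive real eigenvalues $e^{\lambda_1},e^{\lambda_2},e^{-(\lambda_1+\lambda_2)}$, $A=VDV^{-1}$ with $D$ diagonal, $G=\mathbb R^3\rtimes_\phi\mathbb R$ with $\phi_s=\exp(s\log A)$ and $\Gamma=\mathbb Z^3\rtimes_\phi\mathbb Z$, then conjugating $K_t$ by $V$ as described gives left-invariant almost complex structures $J_t$ on $\Gamma\backslash G$ whose Nijenhuis tensors tend to $0$ in the $C^0$-norm.
   Context: The Nijenhuis tensor of a linear endomorphism $J$ of a Lie algebra with $J^2=-\mathrm{id}$ is $N_J(X,Y)=[X,Y]+J[JX,Y]+J[X,JY]-[JX,JY]$ (here with bracket $\{\cdot,\cdot\}$); it is skew-symmetric and bilinear. The bracket $\{\cdot,\cdot\}$ arises as the transport $V^{-1}\circ[V(\cdot),V(\cdot)]$ of the Lie bracket of $\mathbb R^3\rtimes_\phi\mathbb R$ (whose nonzero brackets in the standard basis $E_1,\dots,E_4$ are $[E_1,E_i]=(\log A)E_i$, $i=2,3,4$), with $X_1$ the standard generator of $\mathbb R$ and $X_2,X_3,X_4$ the corresponding eigenvector basis; $J_t:=V^{-1}K_tV$. *)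

From mathcomp Require Import all_boot all_order all_algebra.
From mathcomp Require Import all_classical all_reals all_analysis.
Set Implicit Arguments. Unset Strict Implicit. Unset Printing Implicit Defensive.
Import Order.TTheory GRing.Theory Num.Theory.
Local Open Scope ring_scope.

(* Indices of the ordered basis (X_1,...,X_4) : coordinates 0..3 *)
Definition i0 : 'I_4 := @Ordinal 4 0 isT.
Definition i1 : 'I_4 := @Ordinal 4 1 isT.
Definition i2 : 'I_4 := @Ordinal 4 2 isT.
Definition i3 : 'I_4 := @Ordinal 4 3 isT.

Definition e {R : realType} (i : 'I_4) : 'cV[R]_4 := delta_mx i 0.

Definition brg {R : realType} (l1 l2 : R) (x y : 'cV[R]_4) : 'cV[R]_4 :=
  (l1 * (x i0 0 * y i1 0 - x i1 0 * y i0 0)) *: e i1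
+ (l2 * (x i0 0 * y i2 0 - x i2 0 * y i0 0)) *: e i2
+ (- (l1 + l2) * (x i0 0 * y i3 0 - x i3 0 * y i0 0)) *: e i3.

Definition nijenhuis {R : realType} (br : 'cV[R]_4 -> 'cV[R]_4 -> 'cV[R]_4)
  (J : 'M[R]_4) (x y : 'cV[R]_4) : 'cV[R]_4 :=
  br (J *m x) (J *m y) - J *m br (J *m x) y - J *m br x (J *m y) - br x y.

(* The matrix K_t (column j = coordinates of K_t X_{j+1}) *)
Definition Kt {R : realType} (l1 l2 t : R) : 'M[R]_4 :=
  let d := l1 - l2 in
  let a := 2 * l1 + l2 in
  let b := l1 + 2 * l2 in
  \matrix_(i < 4, j < 4) nth 0 (nth [::] [::
     [:: 1; 1 / t; 2 * b / (d * t); 0];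
     [:: - (2 * a * t) / d; - a / d; - (2 * a * b) / (d ^+ 2); b / (d * t)];
     [:: t; 1 / 2; b / d; - 1 / (2 * t)];
     [:: 0; t; 2 * a * t / d; 0]] i) j.

(* The Lie algebra of G = R^3 x|_phi R, phi_s = exp(s log A), in the basis
   (E_1,...,E_4), E_1 the generator of R: [E_1, w] = (log A) w for w in R^3,
   and R^3 abelian. *)
Definition brG {R : realType} (L : 'M[R]_3) (x y : 'cV[R]_4) : 'cV[R]_4 :=
  @col_mx R 1 3 1 0
    (L *m (x i0 0 *: @dsubmx R 1 3 1 y - y i0 0 *: @dsubmx R 1 3 1 x)).

Definition diag3 {R : realType} (d1 d2 d3 : R) : 'M[R]_3 :=
  diag_mx (\row_(i < 3) nth 0 [:: d1; d2; d3] i).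

(* change of basis from (X_1,..,X_4) to (E_1, v_1, v_2, v_3), columns of V3
   being eigenvectors of A *)
Definition Pmat {R : realType} (V3 : 'M[R]_3) : 'M[R]_4 :=
  @block_mx R 1 3 1 3 1 0 0 V3.

From mathcomp Require Import all_boot all_order all_algebra.
From mathcomp Require Import all_classical all_reals all_analysis.
From mathcomp Require Import ring.
Import Order.TTheory GRing.Theory Num.Theory.
Import numFieldNormedType.Exports.
Local Open Scope classical_set_scope.
Local Open Scope ring_scope.

(* Writing vectors of g in coordinates (col4), a direct computation shows
   K_t^2 = -1 and, since the Nijenhuis tensor is skew-bilinear, that
     N_t(x, y) = t^-1 N1(x, y) + t^-2 N2(x, y)
   with N1, N2 explicit in the Pluecker coordinates x_i y_j - x_j y_i (lemma
   nijenhuis_Kt); the six formulas of the theorem are instances of it.  Any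
   vector of the form t^-1 v1 + t^-2 v2 tends to 0 as t -> +oo.  Finally g is
   the Lie algebra of R^3 x| R written in the eigenbasis of log A: the block
   matrix Pmat V3 is a bracket isomorphism from g onto that Lie algebra, and
   conjugating by a bracket isomorphism preserves J^2 = -1 and transports the
   Nijenhuis tensor, so the structures J_t = P K_t P^-1 inherit both facts. *)

Definition col4 {R : realType} (x0 x1 x2 x3 : R) : 'cV[R]_4 :=
  \col_(k < 4) nth 0 [:: x0; x1; x2; x3] k.

(* The Pluecker coordinate of x /\ y at (i, j); the Nijenhuis tensor, being
   skew-bilinear, is a linear function of these. *)
Definition wedge {R : realType} (x y : 'cV[R]_4) (i j : 'I_4) : R :=
  x i 0 * y j 0 - x j 0 * y i 0.

Section Coordinates.
Context {R : realType}.

Lemma col4E (x : 'cV[R]_4) : x = col4 (x i0 0) (x i1 0) (x i2 0) (x i3 0).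
Proof.
apply/matrixP => i j; rewrite !mxE ord1.
by case: i => [[|[|[|[|i]]]] Hi] //=; congr (x _ _); apply: val_inj.
Qed.

Lemma col4D (x0 x1 x2 x3 y0 y1 y2 y3 : R) :
  col4 x0 x1 x2 x3 + col4 y0 y1 y2 y3 = col4 (x0 + y0) (x1 + y1) (x2 + y2) (x3 + y3).
Proof. by apply/matrixP => i j; rewrite !mxE; case: i => [[|[|[|[|i]]]] Hi]. Qed.

Lemma col4N (x0 x1 x2 x3 : R) : - col4 x0 x1 x2 x3 = col4 (- x0) (- x1) (- x2) (- x3).
Proof. by apply/matrixP => i j; rewrite !mxE; case: i => [[|[|[|[|i]]]] Hi]. Qed.

Lemma col4Z (c x0 x1 x2 x3 : R) :
  c *: col4 x0 x1 x2 x3 = col4 (c * x0) (c * x1) (c * x2) (c * x3).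
Proof. by apply/matrixP => i j; rewrite !mxE; case: i => [[|[|[|[|i]]]] Hi]. Qed.

Lemma e0_col4 : e i0 = col4 1 0 0 0 :> 'cV[R]_4.
Proof. by apply/matrixP => i j; rewrite !mxE ord1; case: i => [[|[|[|[|i]]]] Hi]. Qed.

Lemma e1_col4 : e i1 = col4 0 1 0 0 :> 'cV[R]_4.
Proof. by apply/matrixP => i j; rewrite !mxE ord1; case: i => [[|[|[|[|i]]]] Hi]. Qed.

Lemma e2_col4 : e i2 = col4 0 0 1 0 :> 'cV[R]_4.
Proof. by apply/matrixP => i j; rewrite !mxE ord1; case: i => [[|[|[|[|i]]]] Hi]. Qed.

Lemma e3_col4 : e i3 = col4 0 0 0 1 :> 'cV[R]_4.
Proof. by apply/matrixP => i j; rewrite !mxE ord1; case: i => [[|[|[|[|i]]]] Hi]. Qed.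

Lemma mulmx_col4 (M : 'M[R]_4) (x0 x1 x2 x3 : R) :
  M *m col4 x0 x1 x2 x3 =
  col4 (M i0 i0 * x0 + M i0 i1 * x1 + M i0 i2 * x2 + M i0 i3 * x3)
       (M i1 i0 * x0 + M i1 i1 * x1 + M i1 i2 * x2 + M i1 i3 * x3)
       (M i2 i0 * x0 + M i2 i1 * x1 + M i2 i2 * x2 + M i2 i3 * x3)
       (M i3 i0 * x0 + M i3 i1 * x1 + M i3 i2 * x2 + M i3 i3 * x3).
Proof.
apply/matrixP => i j; rewrite !mxE !big_ord_recr big_ord0 /= !mxE /= add0r.
case: i => [[|[|[|[|i]]]] Hi] //=; rewrite ?addrA;
  by repeat congr (_ + _); congr (_ * _); congr (M _ _); apply: val_inj.
Qed.

Lemma brg_col4 (l1 l2 x0 x1 x2 x3 y0 y1 y2 y3 : R) :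
  brg l1 l2 (col4 x0 x1 x2 x3) (col4 y0 y1 y2 y3) =
  col4 0 (l1 * (x0 * y1 - x1 * y0)) (l2 * (x0 * y2 - x2 * y0))
         (- (l1 + l2) * (x0 * y3 - x3 * y0)).
Proof.
rewrite /brg e1_col4 e2_col4 e3_col4 !col4Z !col4D /col4 !mxE /=.
by apply/matrixP => i j; rewrite !mxE; case: i => [[|[|[|[|i]]]] Hi] /=; ring.
Qed.

End Coordinates.

Section AlmostComplexKt.
Context {R : realType}.
Variables (l1 l2 : R).
Hypothesis l12 : l1 != l2.
Local Notation d := (l1 - l2).
Local Notation a := (2 * l1 + l2).
Local Notation b := (l1 + 2 * l2).

Definition nij_coef1 (x y : 'cV[R]_4) : 'cV[R]_4 :=
  col4 (b * wedge x y i0 i1 + 2 * a * b / d * wedge x y i0 i2)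
       (2 * a * b / d * wedge x y i0 i3 - 2 * a * b / d * wedge x y i1 i2)
       (- b * wedge x y i0 i3 + b * wedge x y i1 i2) 0.

Definition nij_coef2 (x y : 'cV[R]_4) : 'cV[R]_4 :=
  col4 (- b * wedge x y i0 i3 + 2 * b * wedge x y i1 i2)
       (a * b / d * wedge x y i1 i3 + 2 * a * b ^+ 2 / d ^+ 2 * wedge x y i2 i3)
       (- b / 2 * wedge x y i1 i3 - b ^+ 2 / d * wedge x y i2 i3) 0.

(* The only denominators besides t are powers of d = l1 - l2. *)
Lemma d_neq0 : d != 0. Proof. by rewrite subr_eq0. Qed.

Lemma Kt_sqr (t : R) : t != 0 -> Kt l1 l2 t *m Kt l1 l2 t = - 1%:M.
Proof.
move=> t_neq0.
apply/matrixP => i j; rewrite !mxE !big_ord_recr big_ord0 /= /Kt !mxE /=.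
by case: i => [[|[|[|[|i]]]] Hi] //=; case: j => [[|[|[|[|j]]]] Hj] //=;
  field; rewrite ?d_neq0 ?t_neq0.
Qed.

Lemma nijenhuis_Kt (t : R) (x y : 'cV[R]_4) : t != 0 ->
  nijenhuis (brg l1 l2) (Kt l1 l2 t) x y =
  t^-1 *: nij_coef1 x y + t^-1 ^+ 2 *: nij_coef2 x y.
Proof.
move=> t_neq0; rewrite /nij_coef1 /nij_coef2 /wedge [x]col4E [y]col4E.
move: (x i0 0) (x i1 0) (x i2 0) (x i3 0) (y i0 0) (y i1 0) (y i2 0) (y i3 0)
  => x0 x1 x2 x3 y0 y1 y2 y3.
rewrite /nijenhuis !mulmx_col4 !brg_col4 !mulmx_col4 !col4Z !col4N !col4D /Kt !mxE /=.
by congr col4; field; rewrite ?d_neq0 ?t_neq0.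
Qed.

End AlmostComplexKt.

Section Asymptotics.
Context {R : realType}.

Lemma cvg_inv_pinfty : t^-1 @[t --> +oo] --> (0 : R).
Proof.
have t_gt0 : \forall t \near (+oo : set_system R), 0 < t.
  by apply: nbhs_pinfty_gt; exact: real0.
exact: (proj2 (@gtr0_cvgV0 R R _ _ (@id R) t_gt0) cvg_id).
Qed.

Lemma cvg_inv_expansion {m n : nat} {v1 v2 : 'M[R]_(m, n)} {f : R -> 'M[R]_(m, n)} :
  (forall t, 0 < t -> f t = t^-1 *: v1 + t^-1 ^+ 2 *: v2) ->
  forall i j, f t i j @[t --> +oo] --> 0.
Proof.
move=> f_exp i j.
have f_near : \forall t \near +oo, v1 i j * t^-1 + v2 i j * t^-1 ^+ 2 = f t i j.
  near=> t; rewrite f_exp; last by near: t; apply: nbhs_pinfty_gt; exact: real0.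
  by rewrite !mxE mulrC (mulrC (v2 i j)).
apply: cvg_trans (near_eq_cvg f_near) _.
rewrite (_ : 0 = v1 i j * 0 + v2 i j * 0 ^+ 2); last by rewrite expr2 !mulr0 addr0.
apply: cvgD; apply: cvgM; [exact: cvg_cst | exact: cvg_inv_pinfty | exact: cvg_cst |].
by rewrite expr2; apply: cvgM; exact: cvg_inv_pinfty.
Unshelve. all: by end_near.
Qed.

End Asymptotics.

Section SemidirectModel.
Context {R : realType}.

Lemma brg_diag (l1 l2 : R) (x y : 'cV[R]_4) :
  brg l1 l2 x y = brG (diag3 l1 l2 (- (l1 + l2))) x y.
Proof.
rewrite /brG -[LHS](@vsubmxK R 1 3 1).
apply: (f_equal2 (@col_mx R 1 3 1)); apply/matrixP => i j; rewrite !ord1.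
  by rewrite !mxE /= !mulr0 !addr0.
rewrite [x]col4E [y]col4E brg_col4 /diag3 !mxE !big_ord_recr big_ord0 /= !mxE /=.
by case: i => [[|[|[|i]]] Hi] //=; rewrite ?mulr1n ?mulr0n; ring.
Qed.

Lemma Pmat_unit {V3 : 'M[R]_3} : V3 \in unitmx -> Pmat V3 \in unitmx.
Proof. by rewrite !unitmxE /Pmat (det_ublock (1%:M : 'M[R]_1) 0 V3) det1 mul1r. Qed.

Lemma Pmat_col (V3 : 'M[R]_3) (p : 'cV[R]_1) (q : 'cV[R]_3) :
  Pmat V3 *m @col_mx R 1 3 1 p q = col_mx p (V3 *m q).
Proof. by rewrite /Pmat (mul_block_col (1 : 'M[R]_1)) mul1mx !mul0mx addr0 add0r. Qed.

Lemma col_mx_first (p : 'cV[R]_1) (q : 'cV[R]_3) :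
  (@col_mx R 1 3 1 p q : 'cV[R]_4) i0 0 = p 0 0.
Proof.
have -> : i0 = lshift 3 (0 : 'I_1) by apply: val_inj.
exact: col_mxEu.
Qed.

Lemma Pmat_first (V3 : 'M[R]_3) (u : 'cV[R]_4) : (Pmat V3 *m u) i0 0 = u i0 0.
Proof. by rewrite -[u](@vsubmxK R 1 3 1) Pmat_col !col_mx_first. Qed.

Lemma dsubmx_Pmat (V3 : 'M[R]_3) (u : 'cV[R]_4) :
  @dsubmx R 1 3 1 (Pmat V3 *m u) = V3 *m @dsubmx R 1 3 1 u.
Proof. by rewrite -[u](@vsubmxK R 1 3 1) Pmat_col !col_mxKd. Qed.

Lemma brG_Pmat (L V3 : 'M[R]_3) (u v : 'cV[R]_4) : V3 \in unitmx ->
  Pmat V3 *m brG L u v = brG (V3 *m L *m invmx V3) (Pmat V3 *m u) (Pmat V3 *m v).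
Proof.
move=> V3_unit; rewrite /brG Pmat_col !Pmat_first !dsubmx_Pmat.
by rewrite !scalemxAr -mulmxBr !mulmxA mulmxKV.
Qed.

End SemidirectModel.

Lemma conjmx_sqrN1 (R : realType) (n : nat) (P J : 'M[R]_n.+1) : P \in unitmx ->
  J *m J = - 1%:M -> (P *m J *m invmx P) *m (P *m J *m invmx P) = - 1%:M.
Proof.
move=> P_unit JJ; rewrite -!mulmxA mulKmx // (mulmxA J) JJ.
by rewrite mulNmx mul1mx mulmxN mulmxV.
Qed.

Section NijenhuisTransport.
Context {R : realType}.
Context {br br' : 'cV[R]_4 -> 'cV[R]_4 -> 'cV[R]_4} {P : 'M[R]_4}.
Hypotheses (P_unit : P \in unitmx)
  (P_hom : forall u v, P *m br u v = br' (P *m u) (P *m v)).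

Lemma nijenhuis_conj (J : 'M[R]_4) (x y : 'cV[R]_4) :
  nijenhuis br' (P *m J *m invmx P) (P *m x) (P *m y) = P *m nijenhuis br J x y.
Proof.
have conjP z : P *m J *m invmx P *m (P *m z) = P *m (J *m z).
  by rewrite -!mulmxA mulKmx.
by rewrite /nijenhuis !conjP -!P_hom !conjP !mulmxBr.
Qed.

End NijenhuisTransport.

Theorem mainTheorem4 (R : realType) (l1 l2 : R) (hl : l1 != l2) :
  let d := l1 - l2 in
  let a := 2 * l1 + l2 in
  let b := l1 + 2 * l2 in
  let N := fun t => nijenhuis (brg l1 l2) (Kt l1 l2 t) in
  (forall t : R, 0 < t ->
     Kt l1 l2 t *m Kt l1 l2 t = - 1%:M
  /\ N t (e i0) (e i1) = (b / t) *: e i0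
  /\ N t (e i0) (e i2) = (2 * a * b / (d * t)) *: e i0
  /\ N t (e i0) (e i3) = (- b / t ^+ 2) *: e i0 + (2 * a * b / (d * t)) *: e i1
                          - (b / t) *: e i2
  /\ N t (e i1) (e i2) = (2 * b / t ^+ 2) *: e i0 - (2 * a * b / (d * t)) *: e i1
                          + (b / t) *: e i2
  /\ N t (e i1) (e i3) = (a * b / (d * t ^+ 2)) *: e i1 - (b / (2 * t ^+ 2)) *: e i2
  /\ N t (e i2) (e i3) = (2 * a * b ^+ 2 / (d ^+ 2 * t ^+ 2)) *: e i1
                          - (b ^+ 2 / (d * t ^+ 2)) *: e i2)
  /\ (forall (x y : 'cV[R]_4) (k : 'I_4), N t x y k 0 @[t --> +oo] --> 0)
  /\ (forall (A : 'M[int]_3) (V3 : 'M[R]_3),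
        \det A = 1 ->
        V3 \in unitmx ->
        l1 != - (l1 + l2) -> l2 != - (l1 + l2) ->
        map_mx intr A =
          V3 *m diag3 (expR l1) (expR l2) (expR (- (l1 + l2))) *m invmx V3 ->
        let logA := V3 *m diag3 l1 l2 (- (l1 + l2)) *m invmx V3 in
        let J := fun t => Pmat V3 *m Kt l1 l2 t *m invmx (Pmat V3) in
        (forall u v : 'cV[R]_4,
           Pmat V3 *m brg l1 l2 u v = brG logA (Pmat V3 *m u) (Pmat V3 *m v))
        /\ (forall t : R, 0 < t -> J t *m J t = - 1%:M)
        /\ (forall (x y : 'cV[R]_4) (k : 'I_4),
              nijenhuis (brG logA) (J t) x y k 0 @[t --> +oo] --> 0)).

Proof.
move=> d a b N; split; [|split].
- move=> t t_gt0; have t_neq0 : t != 0 by rewrite gt_eqF.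
  split; first exact: Kt_sqr.
  rewrite /N /d /a /b !nijenhuis_Kt // /nij_coef1 /nij_coef2 /wedge.
  rewrite !e0_col4 !e1_col4 !e2_col4 !e3_col4 !col4Z !col4N !col4D !mxE /=.
  by repeat split; congr col4; field; rewrite ?d_neq0 ?t_neq0.
- move=> x y k; apply: cvg_inv_expansion => t t_gt0.
  by rewrite /N nijenhuis_Kt ?(gt_eqF t_gt0).
- move=> A V3 _ V3_unit _ _ _ logA J.
  have P_unit := Pmat_unit V3_unit.
  have P_hom u v : Pmat V3 *m brg l1 l2 u v = brG logA (Pmat V3 *m u) (Pmat V3 *m v).
    by rewrite brg_diag brG_Pmat.
  split; [exact: P_hom | split].
  + by move=> t t_gt0; apply: conjmx_sqrN1 => //; rewrite Kt_sqr ?(gt_eqF t_gt0).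
  + move=> x y k.
    pose x' := invmx (Pmat V3) *m x; pose y' := invmx (Pmat V3) *m y.
    have [-> ->] : x = Pmat V3 *m x' /\ y = Pmat V3 *m y' by rewrite !mulKVmx.
    have JN_exp t : 0 < t ->
        nijenhuis (brG logA) (J t) (Pmat V3 *m x') (Pmat V3 *m y') =
        t^-1 *: (Pmat V3 *m nij_coef1 l1 l2 x' y')
        + t^-1 ^+ 2 *: (Pmat V3 *m nij_coef2 l1 l2 x' y').
      move=> t_gt0; rewrite (nijenhuis_conj P_unit P_hom) nijenhuis_Kt ?(gt_eqF t_gt0) //.
      by rewrite mulmxDr !scalemxAr.
    exact: cvg_inv_expansion JN_exp k 0.
Qed.
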